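(* Let $G$ be a locally compact topological group, let $(X,G)$ be a minimal continuous action on a compact metrizable space, and let $(Y,G)$ be a factor of $(X,G)$ through a proximal factor map $\phi\colon X\to Y$. Then $$r_c(Y,G)\leq r_c(X,G)\leq r_m(Y,G).$$
   Context: A continuous action $(X,G)$ is a continuous map $G\times X\to X$, $(g,x)\mapsto gx$, with $g(hx)=(gh)x$ and $ex=x$; here $X$ is a compact metrizable space with compatible metric $d$. $(X,G)$ is minimal if every orbit $Gx$ is dense in $X$. A factor map $\phi\colon X\to Y$ between continuous actions is a continuous surjection with $\phi(gx)=g\phi(x)$ for all $g,x$. A pair $(x_1,x_2)\in X^2$ is proximal if for every $\varepsilon>0$ there is $g\in G$ with $d(gx_1,gx_2)<\varepsilon$; $P(X,G)$ denotes the set of proximal pairs. A factor map $\phi$ is proximal if $\phi(x)=\phi(y)$ implies $(x,y)\in P(X,G)$. An action is equicontinuous if for every $\varepsilon>0$ there is $\delta>0$ such that $d(x,y)<\delta$ implies $d(gx,gy)<\varepsilon$ for all $g\in G$. The maximal equicontinuous factor $(X_{eq},G)$, with factor map $\pi_{eq}\colon X\to X_{eq}$, is the (unique up to conjugacy) equicontinuous factor of $(X,G)$ of which every equicontinuous factor of $(X,G)$ is a factor. The minimal rank is $r_m(X,G)=\inf\{|\pi_{eq}^{-1}(y)|: y\in X_{eq}\}$ (cardinalities, possibly infinite). The coincidence rank: for $y\in X_{eq}$ let $r_c(X,G;y)=\sup\{n\in\mathbb{N}:\exists x_1,\dots,x_n\in\pi_{eq}^{-1}(y)$ with $(x_i,x_j)\notin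 P(X,G)$ for all $i\neq j\}$; for minimal actions this value does not depend on $y$, and $r_c(X,G)$ denotes this common value. *)

From HB Require Import structures.
From mathcomp Require Import all_boot all_order all_algebra.
From mathcomp Require Import finmap.
From mathcomp Require Import all_classical all_reals all_analysis.
Set Implicit Arguments. Unset Strict Implicit. Unset Printing Implicit Defensive.
Import Order.TTheory GRing.Theory Num.Theory.
Local Open Scope classical_set_scope.
Local Open Scope ring_scope.

Definition topological_group (G : topologicalType)
  (mul : G -> G -> G) (inv : G -> G) (one : G) : Prop :=
  [/\ associative mul, left_id one mul, right_id one mul,
      (left_inverse one inv mul /\ right_inverse one inv mul) &
      (continuous (fun p : G * G => mul p.1 p.2) /\ continuous inv)].

(* compact metrizable space, the metric structure being given by the
   pseudometric structure of X (Hausdorff, hence a genuine metric). *)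
Definition compact_metric_space (R : realType) (X : pseudoMetricType R) : Prop :=
  hausdorff_space X /\ compact [set: X].

Definition continuous_action (G : topologicalType) (mul : G -> G -> G) (one : G)
  (X : topologicalType) (act : G -> X -> X) : Prop :=
  [/\ continuous (fun p : G * X => act p.1 p.2),
      (forall g h x, act g (act h x) = act (mul g h) x) &
      (forall x, act one x = x)].

Definition minimal_action (G X : topologicalType) (act : G -> X -> X) : Prop :=
  forall x, closure [set act g x | g in [set: G]] = [set: X].

Definition proximal (R : realType) (G : Type) (X : pseudoMetricType R)
  (act : G -> X -> X) (x1 x2 : X) : Prop :=
  forall e : R, 0 < e -> exists g, ball (act g x1) e (act g x2).

Definition factor_map (G X Y : topologicalType) (actX : G -> X -> X)
  (actY : G -> Y -> Y) (phi : X -> Y) : Prop :=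
  [/\ continuous phi, (forall y, exists x, phi x = y) &
      (forall g x, phi (actX g x) = actY g (phi x))].

Definition proximal_factor_map (R : realType) (G : topologicalType)
  (X Y : pseudoMetricType R) (actX : G -> X -> X) (actY : G -> Y -> Y)
  (phi : X -> Y) : Prop :=
  factor_map actX actY phi /\
  (forall x y, phi x = phi y -> proximal actX x y).

Definition equicontinuous_action (R : realType) (G : Type)
  (X : pseudoMetricType R) (act : G -> X -> X) : Prop :=
  forall e : R, 0 < e -> exists2 d : R, 0 < d &
    forall x y, ball x d y -> forall g, ball (act g x) e (act g y).

Definition max_equicontinuous_factor (R : realType) (G : topologicalType)
  (mul : G -> G -> G) (one : G) (X : pseudoMetricType R) (actX : G -> X -> X)
  (Xeq : pseudoMetricType R) (actEq : G -> Xeq -> Xeq) (pi : X -> Xeq) : Prop :=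
  [/\ compact_metric_space Xeq, continuous_action mul one actEq,
      equicontinuous_action actEq, factor_map actX actEq pi &
      forall (Z : pseudoMetricType R) (actZ : G -> Z -> Z) (psi : X -> Z),
        compact_metric_space Z -> continuous_action mul one actZ ->
        equicontinuous_action actZ -> factor_map actX actZ psi ->
        exists theta : Xeq -> Z,
          factor_map actEq actZ theta /\ forall x, theta (pi x) = psi x].

Definition card_e (R : realType) (T : choiceType) (A : set T) : \bar R :=
  if `[< finite_set A >] then ((#|` fset_set A|)%:R)%:E else +oo%E.

Definition min_rank (R : realType) (X Xeq : pseudoMetricType R)
  (pi : X -> Xeq) : \bar R :=
  ereal_inf (range (fun y : Xeq => card_e R (pi @^-1` [set y]))).

Definition coincidence_rank_at (R : realType) (G : Type)
  (X Xeq : pseudoMetricType R) (act : G -> X -> X) (pi : X -> Xeq)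
  (y : Xeq) : \bar R :=
  ereal_sup [set (n%:R)%:E | n in
    [set n : nat | exists xs : 'I_n -> X,
       (forall i, pi (xs i) = y) /\
       (forall i j, i != j -> ~ proximal act (xs i) (xs j))]].

From HB Require Import structures.
From mathcomp Require Import all_boot all_order all_algebra.
From mathcomp Require Import finmap.
From mathcomp Require Import all_classical all_reals all_analysis.
From mathcomp Require Import lra.
Import Order.TTheory GRing.Theory Num.Theory.
Local Open Scope classical_set_scope.
Local Open Scope ring_scope.

(* An equicontinuous system has no proximal pairs besides the diagonal, so a
   proximal extension [phi : X -> Y] does not change the maximal equicontinuous
   factor: [piX] factors through [piY \o phi] and vice versa.  By minimality,
   limits of orbits along a suitable ultrafilter carry a pairwise nonproximal
   family of one [piX]-fiber into any other [piX]-fiber.  Lifting a nonproximal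
   family of a [piY]-fiber through [phi] gives [r_c(Y) <= r_c(X)]; conversely
   [phi] is injective on a nonproximal family, and moving it above a given
   point [y] of [Yeq] bounds [r_c(X)] by the size of the [piY]-fiber over [y]. *)

Lemma ultra_cvg_compact {T : Type} {X : topologicalType} {U : set_system T}
  (f : T -> X) : UltraFilter U -> compact [set: X] -> exists p : X, f @ U --> p.
Proof.
move=> UU cX.
have [p [_ cp]] := cX (f @ U) (fmap_proper_filter f _) filterT.
exists p => V Vp.
have [//|Uc] := in_ultra_setVsetC (f @^-1` V) UU.
by have [z [/= ? ?]] := cp (~` V) V Uc Vp.
Qed.

Lemma continuous_act {G X : topologicalType} (act : G -> X -> X) :
  continuous (fun p : G * X => act p.1 p.2) -> forall h, continuous (act h).
Proof.
move=> c h x.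
apply: (cvg_comp (fun y => (h, y)) _ _ (c (h, x))).
by apply: cvg_pair; [exact: cvg_cst | exact: cvg_id].
Qed.

Section Proximality.
Context {R : realType} {G : Type} {X : pseudoMetricType R} {act : G -> X -> X}.

Lemma proximal_cvg_same {F : set_system G} {FF : ProperFilter F} {x x' z : X} :
  (fun g => act g x) @ F --> z -> (fun g => act g x') @ F --> z ->
  proximal act x x'.
Proof.
move=> cx cx' e e0.
have e2 : 0 < e / 2 by rewrite divr_gt0.
have [g [gx gx']] := filter_ex (filterI (cvg_ball cx e2) (cvg_ball cx' e2)).
by exists g; apply: ball_splitr gx gx'.
Qed.

Lemma proximal_common_limit :
  hausdorff_space X -> compact [set: X] -> forall x x', proximal act x x' ->
  exists (U : set_system G) (p : X),
    [/\ ProperFilter U, (fun g => act g x) @ U --> p & (fun g => act g x') @ U --> p].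
Proof.
move=> hX cX x x' pxx'.
pose F := filter_from [set d : R | 0 < d]
  (fun d => [set g | ball (act g x) d (act g x')]).
have FF : ProperFilter F.
  apply: filter_from_proper; last by move=> d /pxx' [g hg]; exists g.
  apply: filter_from_filter; first by exists 1; rewrite /= ltr01.
  move=> i j i0 j0; exists (Num.min i j); first by rewrite /= lt_min i0 j0.
  by move=> g hg; split; apply: le_ball hg; rewrite ge_min lexx ?orbT.
have [U [UU FU]] := ultraFilterLemma FF.
have UP : ProperFilter U by apply: ultra_proper.
have [p cx] := ultra_cvg_compact (fun g => act g x) UU cX.
have [p' cx'] := ultra_cvg_compact (fun g => act g x') UU cX.
exists U, p; split => //; suff -> : p = p' by [].
apply: (close_eq hX); rewrite ball_close => e.
have e4 : 0 < e%:num / 2 / 2 by rewrite !divr_gt0.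
have near_x' : U [set g | ball (act g x) (e%:num / 2 / 2) (act g x')].
  by apply: FU; exists (e%:num / 2 / 2).
have [g [[gx gx'] xx']] :=
  filter_ex (filterI (filterI (cvg_ball cx e4) (cvg_ball cx' e4)) near_x').
apply: (ball_split (z := act g x')); first exact: ball_split gx xx'.
by apply/ball_sym/(le_ball _ gx'); have := gt0 e; lra.
Qed.

Lemma proximal_of_cvg {mul : G -> G -> G} {F : set_system G} {FF : ProperFilter F}
  {x x' z z' : X} :
  (forall h, continuous (act h)) -> (forall g h y, act g (act h y) = act (mul g h) y) ->
  (fun g => act g x) @ F --> z -> (fun g => act g x') @ F --> z' ->
  proximal act z z' -> proximal act x x'.
Proof.
move=> hc hm cx cx' pzz' e e0.
have e4 : 0 < e / 2 / 2 by rewrite !divr_gt0.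
have [h hzz'] := pzz' _ e4.
have [g [gx gx']] := filter_ex (filterI
  (cvg_ball (cvg_comp _ _ cx (hc h z)) e4) (cvg_ball (cvg_comp _ _ cx' (hc h z')) e4)).
exists (mul h g); rewrite -!hm.
apply: (ball_split (z := act h z)); last exact: ball_split hzz' gx'.
by apply/ball_sym/(le_ball _ gx); lra.
Qed.

Lemma proximal_equicontinuous_eq {mul : G -> G -> G} {inv : G -> G} {one : G} :
  hausdorff_space X -> left_inverse one inv mul ->
  (forall g h x, act g (act h x) = act (mul g h) x) -> (forall x, act one x = x) ->
  equicontinuous_action act -> forall x x', proximal act x x' -> x = x'.
Proof.
move=> hX linv hm h1 heq x x' pxx'.
apply: close_eq => //; rewrite ball_close => e.
have [d d0 hd] := heq _ (gt0 e).
have [g hg] := pxx' _ d0.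
by have := hd _ _ hg (inv g); rewrite !hm linv !h1.
Qed.

End Proximality.

Lemma proximal_map {R : realType} {G : Type} {X Y : pseudoMetricType R}
  {act : G -> X -> X} {actY : G -> Y -> Y} {f : X -> Y} :
  hausdorff_space X -> compact [set: X] -> continuous f ->
  (forall g x, f (act g x) = actY g (f x)) ->
  forall x x', proximal act x x' -> proximal actY (f x) (f x').
Proof.
move=> hX cX fc fe x x' /(proximal_common_limit hX cX) [U [p [UP cx cx']]].
apply: (@proximal_cvg_same _ _ _ actY U _ _ _ (f p)).
- by under eq_fun do rewrite -fe; exact: cvg_comp cx (fc p).
- by under eq_fun do rewrite -fe; exact: cvg_comp cx' (fc p).
Qed.

Definition nonproximal_fiber_family {R : realType} {G : Type} {X : pseudoMetricType R}
  {Z : Type} (act : G -> X -> X) (pi : X -> Z) (z : Z) {n : nat} (xs : 'I_n -> X) :=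
  (forall i, pi (xs i) = z) /\ (forall i j, i != j -> ~ proximal act (xs i) (xs j)).

Section MinimalFactor.
Context {R : realType} {G : topologicalType} {mul : G -> G -> G} {one : G}.
Context {X Z : pseudoMetricType R} {actX : G -> X -> X} {actZ : G -> Z -> Z}
  {piZ : X -> Z}.
Hypotheses (hZ : hausdorff_space Z) (cX : compact [set: X])
  (HactX : continuous_action mul one actX) (Hmin : minimal_action actX)
  (Hpi : factor_map actX actZ piZ).

Lemma factor_orbit_dense (a b : Z) V : nbhs b V -> exists g, V (actZ g a).
Proof.
case: Hpi => pic pis pie Vb.
have [x0 <-] := pis a; have [w wb] := pis b.
have : closure [set actX g x0 | g in [set: G]] w by rewrite Hmin.
move=> /(_ (piZ @^-1` V)) [].
  by rewrite -wb in Vb; exact: pic w _ Vb.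
by move=> _ [[g _ <-] /=]; rewrite pie => hV; exists g.
Qed.

Lemma factor_orbit_ultra_cvg (a b : Z) :
  exists U : set_system G, UltraFilter U /\ (fun g => actZ g a) @ U --> b.
Proof.
pose F := filter_from (nbhs b) (fun V => [set g | V (actZ g a)]).
have FF : ProperFilter F.
  apply: filter_from_proper; last by move=> V /(factor_orbit_dense a) [g hg]; exists g.
  apply: filter_from_filter; first by exists setT; exact: filterT.
  by move=> V1 V2 h1 h2; exists (V1 `&` V2) => //; exact: filterI.
have [U [UU FU]] := ultraFilterLemma FF.
by exists U; split => // V Vb; apply: FU; exists V.
Qed.

(* Limits along an ultrafilter [U] with [actZ g a --> b] carry the family from
   the fiber over [a] to the fiber over [b]. *)
Lemma nonproximal_fiber_transfer (a b : Z) n (xs : 'I_n -> X) :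
  nonproximal_fiber_family actX piZ a xs ->
  exists zs : 'I_n -> X, nonproximal_fiber_family actX piZ b zs.
Proof.
case: (HactX) => /continuous_act hc hm _; case: Hpi => pic _ pie.
move=> [hxs hnp]; have [U [UU cab]] := factor_orbit_ultra_cvg a b.
have UP : ProperFilter U by apply: ultra_proper.
have lim i := cid (ultra_cvg_compact (fun g => actX g (xs i)) UU cX).
exists (fun i => projT1 (lim i)); split => [i | i j ij pz].
  apply: (cvg_unique hZ _ cab) => /=.
  have -> : (fun g => actZ g a) = piZ \o (fun g => actX g (xs i)).
    by apply: funext => g /=; rewrite pie hxs.
  exact: cvg_comp (projT2 (lim i)) (pic _).
exact: hnp i j ij (proximal_of_cvg hc hm (projT2 (lim i)) (projT2 (lim j)) pz).
Qed.

End MinimalFactor.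

Lemma coincidence_rank_at_le {R : realType} {G : Type}
  {X X' Z Z' : pseudoMetricType R} (act : G -> X -> X) (act' : G -> X' -> X')
  (pi : X -> Z) (pi' : X' -> Z') a b :
  (forall n (xs : 'I_n -> X), nonproximal_fiber_family act pi a xs ->
     exists zs : 'I_n -> X', nonproximal_fiber_family act' pi' b zs) ->
  (coincidence_rank_at act pi a <= coincidence_rank_at act' pi' b)%E.
Proof.
move=> H; apply: ereal_sup_le => _ [n [xs hxs] <-].
by have [zs hzs] := H n xs hxs; exists n => //; exists zs.
Qed.

Lemma card_e_ge_injective {R : realType} {T : choiceType} {A : set T} {n : nat}
  {f : 'I_n -> T} : injective f -> (forall i, A (f i)) -> ((n%:R)%:E <= card_e R A)%E.
Proof.
move=> finj fA; rewrite /card_e; case: asboolP => Afin; last exact: leey.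
rewrite lee_fin ler_nat.
have -> : n = #|` [fset f i | i in 'I_n]%fset| by rewrite card_imfset ?size_enum_ord.
apply: fsubset_leq_card; apply/fsubsetP => _ /imfsetP [i _ ->].
by rewrite in_fset_set // inE.
Qed.

Lemma factor_map_comp {G X Y Z : topologicalType} {actX : G -> X -> X}
  {actY : G -> Y -> Y} {actZ : G -> Z -> Z} {f : X -> Y} {h : Y -> Z} :
  factor_map actX actY f -> factor_map actY actZ h -> factor_map actX actZ (h \o f).
Proof.
move=> [fc fs fe] [hc hs he]; split.
- by move=> x; apply: cvg_comp (fc x) (hc (f x)).
- by move=> z; have [y <-] := hs z; have [x <-] := fs y; exists x.
- by move=> g x /=; rewrite fe he.
Qed.

Lemma compact_quotient_lift {X Y Z : topologicalType} {phi : X -> Y} {f : X -> Z} :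
  compact [set: X] -> hausdorff_space Y -> continuous phi ->
  (forall y, exists x, phi x = y) -> continuous f ->
  (forall x x', phi x = phi x' -> f x = f x') ->
  exists psi : Y -> Z, continuous psi /\ forall x, psi (phi x) = f x.
Proof.
move=> cX hY phic phis fc fphi.
pose psi y := f (projT1 (cid (phis y))).
have psi_phi x : psi (phi x) = f x by apply: fphi; exact: projT2 (cid (phis (phi x))).
exists psi; split => //; apply/continuous_closedP => C cC.
have -> : psi @^-1` C = phi @` (f @^-1` C).
  apply/seteqP; split => [y Cy|_ [x Cx <-]]; last by rewrite /preimage /= psi_phi.
  by exists (projT1 (cid (phis y))) => //; exact: projT2 (cid (phis y)).
apply: (compact_closed hY); apply: continuous_compact.
  exact: continuous_subspaceT.
apply: (subclosed_compact _ cX) => //.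
by move/continuous_closedP: fc; apply.
Qed.

Lemma factor_map_quotient {G X Y Z : topologicalType} {actX : G -> X -> X}
  {actY : G -> Y -> Y} {actZ : G -> Z -> Z} {phi : X -> Y} {f : X -> Z} :
  compact [set: X] -> hausdorff_space Y ->
  factor_map actX actY phi -> factor_map actX actZ f ->
  (forall x x', phi x = phi x' -> f x = f x') ->
  exists psi : Y -> Z, factor_map actY actZ psi /\ forall x, psi (phi x) = f x.
Proof.
move=> cX hY [phic phis phie] [fc fs fe] fphi.
have [psi [psic psi_phi]] := compact_quotient_lift cX hY phic phis fc fphi.
exists psi; split => //; split => //.
- by move=> z; have [x <-] := fs z; exists (phi x).
- by move=> g y; have [x <-] := phis y; rewrite -phie !psi_phi fe.
Qed.

Section ProximalExtension.
Context {R : realType} {G : topologicalType} {mul : G -> G -> G} {inv : G -> G}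
  {one : G}.
Context {X Y Xeq Yeq : pseudoMetricType R} {actX : G -> X -> X} {actY : G -> Y -> Y}
  {actXeq : G -> Xeq -> Xeq} {actYeq : G -> Yeq -> Yeq}
  {phi : X -> Y} {piX : X -> Xeq} {piY : Y -> Yeq}.
Hypotheses (linv : left_inverse one inv mul) (HX : compact_metric_space X)
  (hY : hausdorff_space Y)
  (HactX : continuous_action mul one actX) (Hmin : minimal_action actX)
  (Hphi : proximal_factor_map actX actY phi)
  (HXeq : max_equicontinuous_factor mul one actX actXeq piX)
  (HYeq : max_equicontinuous_factor mul one actY actYeq piY).

Lemma proximal_factor_fiber_eq x x' : phi x = phi x' -> piX x = piX x'.
Proof.
case: HX => hX cX; case: Hphi => _ phiprox.
case: HXeq => [[hXe _] [_ hm h1] heq [pic _ pie] _].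
move=> /phiprox /(proximal_map hX cX pic pie).
exact: (proximal_equicontinuous_eq hXe linv hm h1 heq).
Qed.

Lemma piX_factors_through_piY :
  exists alpha : Yeq -> Xeq, forall x, alpha (piY (phi x)) = piX x.
Proof.
case: HX => _ cX; case: Hphi => phif _.
case: HXeq => [cXe caXe eqXe piXf _]; case: HYeq => [_ _ _ _ univY].
have [psi [psif psi_phi]] :=
  factor_map_quotient cX hY phif piXf proximal_factor_fiber_eq.
have [alpha [_ alpha_piY]] := univY _ _ psi cXe caXe eqXe psif.
by exists alpha => x; rewrite alpha_piY psi_phi.
Qed.

Lemma piY_phi_factors_through_piX :
  exists theta : Xeq -> Yeq, forall x, theta (piX x) = piY (phi x).
Proof.
case: Hphi => phif _; case: HXeq => [_ _ _ _ univX].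
case: HYeq => [cYe caYe eqYe piYf _].
have [theta [_ theta_piX]] := univX _ _ _ cYe caYe eqYe (factor_map_comp phif piYf).
by exists theta.
Qed.

Lemma coincidence_rank_at_factor_le (x0 : Xeq) (y0 : Yeq) :
  (coincidence_rank_at actY piY y0 <= coincidence_rank_at actX piX x0)%E.
Proof.
case: HX => hX cX; case: Hphi => [[phic phis phie] _].
case: HXeq => [[hXe _] _ _ piXf _].
have [alpha alpha_piY] := piX_factors_through_piY.
apply: coincidence_rank_at_le => n ys [hys hnp].
pose xs i := projT1 (cid (phis (ys i))).
have phi_xs i : phi (xs i) = ys i by exact: projT2 (cid (phis (ys i))).
apply: (nonproximal_fiber_transfer hXe cX HactX Hmin piXf (alpha y0) x0 _ xs); split.
  by move=> i; rewrite -alpha_piY phi_xs hys.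
move=> i j ij /(proximal_map hX cX phic phie); rewrite !phi_xs.
exact: hnp.
Qed.

(* Distinct points of a [phi]-fiber are proximal, so [phi] is injective on a
   nonproximal family. *)
Lemma coincidence_rank_at_le_fiber_card (x0 : Xeq) (y : Yeq) :
  (coincidence_rank_at actX piX x0 <= card_e R (piY @^-1` [set y]))%E.
Proof.
case: HX => _ cX; case: Hphi => [[_ phis _] phiprox].
case: HXeq => [[hXe _] _ _ piXf _]; case: HYeq => [_ _ _ [_ piYs _] _].
have [theta theta_piX] := piY_phi_factors_through_piX.
have [x1 phi_x1] : exists x1, piY (phi x1) = y.
  by have [y1 <-] := piYs y; have [x1 <-] := phis y1; exists x1.
apply: ge_ereal_sup => _ [n [xs hxs] <-].
have [zs [hzs hnz]] :=
  nonproximal_fiber_transfer hXe cX HactX Hmin piXf x0 (piX x1) _ xs hxs.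
apply: (card_e_ge_injective (f := fun i => phi (zs i))).
- move=> i j /phiprox pij; apply/eqP; apply: contraT => ij.
  by case: (hnz i j ij pij).
- by move=> i; rewrite /preimage /= -theta_piX hzs theta_piX phi_x1.
Qed.

End ProximalExtension.

Theorem lemma3p2 (R : realType) (G : topologicalType)
  (mul : G -> G -> G) (inv : G -> G) (one : G)
  (HG : topological_group mul inv one) (HGlc : locally_compact [set: G])
  (X Y : pseudoMetricType R) (HX : compact_metric_space X)
  (HY : compact_metric_space Y)
  (actX : G -> X -> X) (actY : G -> Y -> Y)
  (HactX : continuous_action mul one actX) (HactY : continuous_action mul one actY)
  (Hmin : minimal_action actX)
  (phi : X -> Y) (Hphi : proximal_factor_map actX actY phi)
  (Xeq : pseudoMetricType R) (actXeq : G -> Xeq -> Xeq) (piX : X -> Xeq)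
  (HXeq : max_equicontinuous_factor mul one actX actXeq piX)
  (Yeq : pseudoMetricType R) (actYeq : G -> Yeq -> Yeq) (piY : Y -> Yeq)
  (HYeq : max_equicontinuous_factor mul one actY actYeq piY) :
  forall (x0 : Xeq) (y0 : Yeq),
    (coincidence_rank_at actY piY y0 <= coincidence_rank_at actX piX x0)%E /\
    (coincidence_rank_at actX piX x0 <= min_rank piY)%E.
Proof.
move=> x0 y0; case: HG => _ _ _ [linv _] _; case: HY => hY _.
split.
  exact: coincidence_rank_at_factor_le linv HX hY HactX Hmin Hphi HXeq HYeq x0 y0.
apply: le_ereal_inf_tmp => _ [y _ <-].
exact: coincidence_rank_at_le_fiber_card HX HactX Hmin Hphi HXeq HYeq x0 y.
Qed.
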